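(* Let $(X,b)$ be a weighted graph, let $F=(F_x)_{x\in X}$ be a Hermitian vector bundle over $X$, let $\Phi$ be a connection on $F$, and let $W$ be a self-adjoint bundle endomorphism on $F$. Assume: (1) $(X,b)$ is locally finite; (2) all connected components of $(X,b)$ are infinite; (3) the quadratic form $q_{W_{\min}}$ is nonnegative or the quadratic form $q_{-W_{\max}-2\deg}$ is nonnegative. Then the magnetic Schrödinger operator $\mathcal M=\mathcal M_{b,\Phi,W}\colon\Gamma(X;F)\to\Gamma(X;F)$ is surjective.
   Context: A weighted graph is a pair $(X,b)$ with $X$ countable and $b\colon X\times X\to[0,\infty)$ satisfying $b(x,x)=0$, $b(x,y)=b(y,x)$, and $\deg(x):=\sum_{y}b(x,y)<\infty$ for all $x,y$. Write $x\sim y$ if $b(x,y)>0$; $(X,b)$ is locally finite if each $x$ has finitely many $y$ with $b(x,y)>0$. Connected components are the equivalence classes of the relation ''connected by a finite path $x_1\sim x_2\sim\dots\sim x_n$''. For $V\colon X\to\mathbb R$, the form $q_V\colon C_c(X)\to\mathbb R$ (finitely supported complex functions) is $q_V(f)=\frac12\sum_{x,y}b(x,y)|f(x)-f(y)|^2+\sum_x|f(x)|^2V(x)$; it is nonnegative if $q_V(f)\ge0$ for all $f\in C_c(X)$. A Hermitian vector bundle is a family $F=(F_x)_{x\in X}$ of finite-dimensional complex inner product spaces; $\Gamma(X;F)=\prod_x F_x$. A connection is a family of unitary maps $\Phi_{xy}\colon F_y\to F_x$ with $\Phi_{yx}=\Phi_{xy}^{-1}$. A self-adjoint bundle endomorphism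 is a family of self-adjoint linear maps $W(x)\colon F_x\to F_x$; $W_{\min}(x)$ and $W_{\max}(x)$ denote the smallest and largest eigenvalues of $W(x)$. For locally finite $(X,b)$, $\mathcal M f(x)=\sum_{y}b(x,y)(f(x)-\Phi_{xy}f(y))+W(x)f(x)$ for $f\in\Gamma(X;F)$. *)

From HB Require Import structures.
From mathcomp Require Import all_boot all_order all_algebra.
From mathcomp Require Import all_classical all_reals all_analysis.
From mathcomp Require Import complex.
From Stdlib Require Import Relations.
Import Order.TTheory GRing.Theory Num.Theory.

Set Implicit Arguments.
Unset Strict Implicit.
Unset Printing Implicit Defensive.

Local Open Scope ring_scope.
Local Open Scope classical_set_scope.

Section MagneticDefs.
Context {R : realType} {X : countType}.
Local Notation C := (R[i]).

Definition weighted_graph (b : X -> X -> R) : Prop :=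
  [/\ (forall x y, 0 <= b x y),
      (forall x, b x x = 0),
      (forall x y, b x y = b y x) &
      (forall x, (\esum_(y in [set: X]) (b x y)%:E < +oo)%E)].

Definition deg (b : X -> X -> R) (x : X) : R :=
  fine (\esum_(y in [set: X]) (b x y)%:E)%E.

Definition locally_finite (b : X -> X -> R) : Prop :=
  forall x, finite_set [set y | 0 < b x y].

Definition gconnected (b : X -> X -> R) : X -> X -> Prop :=
  clos_refl_trans X (fun x y => 0 < b x y).

Definition all_components_infinite (b : X -> X -> R) : Prop :=
  forall x, infinite_set [set y | gconnected b x y].

Definition finsupp (f : X -> C) : Prop := finite_set [set x | f x != 0].

(* q_V(f) = 1/2 sum_{x,y} b(x,y) |f(x)-f(y)|^2 + sum_x |f(x)|^2 V(x);
   the first (nonnegative) sum is an unordered sum in [0,+oo], the second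
   is a finite sum (f is finitely supported). *)
Definition qform (b : X -> X -> R) (V : X -> R) (f : X -> C) : \bar R :=
  ((2^-1)%:E * (\esum_(p in [set: X * X])
                  (b p.1 p.2 * (Normc.normc (f p.1 - f p.2)) ^+ 2)%:E)
   + (\sum_(x \in [set: X]) (Normc.normc (f x)) ^+ 2 * V x)%:E)%E.

Definition qform_nonneg (b : X -> X -> R) (V : X -> R) : Prop :=
  forall f : X -> C, finsupp f -> (0 <= qform b V f)%E.

(* Hermitian vector bundle: fibre F_x = C^(n x) with the standard inner
   product; adjoint = conjugate transpose. *)
Definition adjmx (m k : nat) (A : 'M[C]_(m, k)) : 'M[C]_(k, m) :=
  (map_mx (@conjc R) A)^T.

Definition connection (n : X -> nat) (Phi : forall x y, 'M[C]_(n x, n y)) : Prop :=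
  forall x y,
    [/\ Phi x y *m adjmx (Phi x y) = 1%:M,
        adjmx (Phi x y) *m Phi x y = 1%:M,
        Phi y x *m Phi x y = 1%:M &
        Phi x y *m Phi y x = 1%:M].

Definition selfadjoint_endo (n : X -> nat) (W : forall x, 'M[C]_(n x)) : Prop :=
  forall x, adjmx (W x) = W x.

(* smallest / largest eigenvalue of the self-adjoint W(x) (eigenvalues are real) *)
Definition Wmin (n : X -> nat) (W : forall x, 'M[C]_(n x)) (x : X) : R :=
  inf [set r : R | eigenvalue (W x) (r%:C)%C].
Definition Wmax (n : X -> nat) (W : forall x, 'M[C]_(n x)) (x : X) : R :=
  sup [set r : R | eigenvalue (W x) (r%:C)%C].

(* magnetic Schroedinger operator (for locally finite b the sum over y is a
   finite sum; \sum_(y \in A) is the finitely-supported sum of fsbigop) *)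
Definition magnetic (b : X -> X -> R) (n : X -> nat)
    (Phi : forall x y, 'M[C]_(n x, n y)) (W : forall x, 'M[C]_(n x))
    (f : forall x, 'cV[C]_(n x)) (x : X) : 'cV[C]_(n x) :=
  \sum_(y \in [set: X]) (((b x y)%:C)%C *: (f x - Phi x y *m f y)) + W x *m f x.

End MagneticDefs.

(* The transpose M^T of M for the bilinear pairing (v, f) |-> sum_x v(x)^T f(x)
   is again a magnetic Schroedinger operator, for the connection (Phi y x)^T and
   the potential W^T, which satisfy the same hypotheses.  If u is finitely
   supported and M^T u = 0, Kato's inequality at each vertex shows that |u| has
   nonpositive energy for the form of hypothesis (3).  As every component is
   infinite, some vertex q with u q = 0 is adjacent to the support of u, and
   adding t 1_q to |u| lowers this energy to first order, contradicting its
   nonnegativity.  So M^T is injective on finitely supported sections.  The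
   functional v |-> (v, g) then vanishes on the kernel of M^T, hence, in the
   countable coordinates of M^T v, it is a formal linear combination whose
   coefficients form a section f with M f = g. *)

From HB Require Import structures.
From mathcomp Require Import all_boot all_order all_algebra.
From mathcomp Require Import all_classical all_reals all_analysis.
From mathcomp Require Import complex.
From mathcomp Require Import ring lra.
Import Order.TTheory GRing.Theory Num.Theory.

Set Implicit Arguments.
Unset Strict Implicit.
Unset Printing Implicit Defensive.

Local Open Scope ring_scope.
Local Open Scope classical_set_scope.

Section UniqSums.
Context {T : choiceType}.

Lemma fsbigT_uniq (V : nmodType) (F : T -> V) (r : seq T) :
  uniq r -> (forall x, x \notin r -> F x = 0) ->
  \sum_(x \in [set: T]) F x = \sum_(x <- r) F x.
Proof.
move=> ur F0; rewrite (fsbig_seq _ _ ur); apply/esym/fsbig_widen => // x [_ /=].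
by move=> xr; apply: F0; apply/negP.
Qed.

Lemma big_uniq_widen (V : nmodType) (F : T -> V) (r1 r2 : seq T) :
  uniq r1 -> uniq r2 -> {subset r1 <= r2} -> (forall x, x \notin r1 -> F x = 0) ->
  \sum_(x <- r1) F x = \sum_(x <- r2) F x.
Proof.
move=> u1 u2 s12 F0; rewrite -(fsbigT_uniq u1 F0) (fsbigT_uniq u2) // => x xr2.
by apply: F0; apply: contra xr2; apply: s12.
Qed.

Lemma esumT_uniq (R : realType) (a : T -> R) (r : seq T) :
  (forall x, 0 <= a x) -> uniq r -> (forall x, x \notin r -> a x = 0) ->
  (\esum_(x in [set: T]) (a x)%:E = (\sum_(x <- r) a x)%:E)%E.
Proof.
move=> a0 ur a0r.
have -> : (\esum_(x in [set: T]) (a x)%:E = \esum_(x in [set` r]) (a x)%:E)%E.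
  rewrite [in RHS]esum_mkcond; congr esum; apply: funext => x.
  case: ifPn => // /negP xr; rewrite a0r //; apply/negP => xr'; apply: xr.
  by rewrite inE.
rewrite esum_fset; last 2 first.
- exact: finite_seq.
- by move=> i _; rewrite lee_fin.
by rewrite -fsbig_seq // sumEFin.
Qed.

End UniqSums.

(* [P] carves out of [V] a vector space with the operation [subZ v c w = v - c w],
   and [T] maps it linearly to finitely supported sequences.  The k-th
   coefficient is read off any [v] whose image [T v] ends at index k; this is
   consistent because [phi] vanishes on the kernel of [T]. *)
Section FactorThroughCoords.
Variables (K : fieldType) (V : Type) (P : V -> Prop) (subZ : V -> K -> V -> V)
  (T : V -> nat -> K) (phi : V -> K).
Hypotheses (P_subZ : forall v c w, P v -> P w -> P (subZ v c w))
  (T_subZ : forall v c w j, P v -> P w -> T (subZ v c w) j = T v j - c * T w j)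
  (phi_subZ : forall v c w, P v -> P w -> phi (subZ v c w) = phi v - c * phi w)
  (phi_ker : forall v, P v -> (forall j, T v j = 0) -> phi v = 0).

Definition coefs_represent k (a : nat -> K) := forall v, P v ->
  (forall j, (k <= j)%N -> T v j = 0) -> phi v = \sum_(j < k) T v j * a j.

Definition next_coef k (a : nat -> K) : K :=
  match pselect (exists v, [/\ P v, (forall j, (k < j)%N -> T v j = 0) & T v k != 0]) with
  | left H => let v := projT1 (cid H) in (phi v - \sum_(j < k) T v j * a j) / T v k
  | right _ => 0
  end.

Definition extend_coef k (a : nat -> K) j := if j == k then next_coef k a else a j.

Lemma coefs_represent_extend k a :
  coefs_represent k a -> coefs_represent k.+1 (extend_coef k a).
Proof.
move=> rep v Pv Tv; rewrite big_ord_recr /= /extend_coef eqxx.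
under eq_bigr => i _ do rewrite (ltn_eqF (ltn_ord i)).
have [Tvk0|Tvk0] := eqVneq (T v k) 0.
  rewrite Tvk0 mul0r addr0; apply: rep => // j.
  by rewrite leq_eqVlt => /orP[/eqP <-|]; last exact: Tv.
rewrite /next_coef; case: pselect => [H|[]]; last by exists v.
case: (cid H) => v0 [Pv0 Tv0 Tv0k] /=; set c := T v k / T v0 k.
have E : phi v - c * phi v0 = \sum_(j < k) T v j * a j - c * \sum_(j < k) T v0 j * a j.
  rewrite -phi_subZ // (rep _ (@P_subZ _ c _ Pv Pv0)); last first.
    move=> j; rewrite T_subZ // leq_eqVlt => /orP[/eqP <-|kj].
      by rewrite /c divfK // subrr.
    by rewrite Tv // Tv0 // mulr0 subr0.
  by rewrite mulr_sumr -sumrB; apply: eq_bigr => j _; rewrite T_subZ // mulrBl mulrA.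
rewrite -[phi v](subrK (c * phi v0)) E /c; field; exact: Tv0k.
Qed.

Fixpoint coef_prefix k : nat -> K :=
  if k is k'.+1 then extend_coef k' (coef_prefix k') else fun=> 0.

Lemma coefs_represent_prefix k : coefs_represent k (coef_prefix k).
Proof.
elim: k => [|k IH] /=; last exact: coefs_represent_extend.
by move=> v Pv Tv; rewrite big_ord0; apply: phi_ker => // j; apply: Tv.
Qed.

Definition coef_seq j := coef_prefix j.+1 j.

Lemma coef_prefixE k j : (j < k)%N -> coef_prefix k j = coef_seq j.
Proof.
elim: k => // k IH; rewrite ltnS leq_eqVlt => /orP[/eqP ->|jk] /=.
  by rewrite /coef_seq /= /extend_coef eqxx.
by rewrite /extend_coef (ltn_eqF jk) IH.
Qed.

Lemma factor_through_coords : exists a : nat -> K, forall v N, P v ->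
  (forall j, (N <= j)%N -> T v j = 0) -> phi v = \sum_(j < N) T v j * a j.
Proof.
exists coef_seq => v N Pv Tv; rewrite (coefs_represent_prefix Pv Tv).
by apply: eq_bigr => j _; rewrite coef_prefixE.
Qed.

End FactorThroughCoords.

Section HermitianGeometry.
Variable R : realType.
Local Notation C := R[i].
Local Notation Re := (@complex.Re R).
Local Notation Im := (@complex.Im R).

Lemma ReD (a c : C) : Re (a + c) = Re a + Re c. Proof. by case: a; case: c. Qed.
Lemma ReB (a c : C) : Re (a - c) = Re a - Re c. Proof. by case: a; case: c. Qed.
Lemma ReZ (r : R) (a : C) : Re ((r%:C)%C * a) = r * Re a.
Proof. by case: a => a1 a2 /=; ring. Qed.
Lemma Re_sum (I : Type) (r : seq I) (F : I -> C) :
  Re (\sum_(i <- r) F i) = \sum_(i <- r) Re (F i).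
Proof. by elim: r => [|x r IH]; rewrite ?big_nil // !big_cons ReD IH. Qed.

Definition redot m (v w : 'cV[C]_m) : R := Re ((adjmx v *m w) 0 0).
Definition sqnorm m (v : 'cV[C]_m) := redot v v.

Lemma redotE m (v w : 'cV[C]_m) :
  redot v w = \sum_k (Re (v k 0) * Re (w k 0) + Im (v k 0) * Im (w k 0)).
Proof.
rewrite /redot mxE Re_sum; apply: eq_bigr => k _; rewrite !mxE.
by case: (v k 0) => a1 a2; case: (w k 0) => c1 c2 /=; ring.
Qed.

Lemma sqnormE m (v : 'cV[C]_m) : sqnorm v = \sum_k (Re (v k 0) ^+ 2 + Im (v k 0) ^+ 2).
Proof. by rewrite /sqnorm redotE; apply: eq_bigr => k _; rewrite !expr2. Qed.

Lemma sqnorm_ge0 m (v : 'cV[C]_m) : 0 <= sqnorm v.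
Proof. by rewrite sqnormE sumr_ge0 // => k _; rewrite addr_ge0 ?sqr_ge0. Qed.

Lemma sqnorm_eq0 m (v : 'cV[C]_m) : sqnorm v = 0 -> v = 0.
Proof.
rewrite sqnormE => /eqP; rewrite psumr_eq0 => [/allP v0|k _]; last first.
  by rewrite addr_ge0 ?sqr_ge0.
apply/matrixP => k l; rewrite ord1 mxE.
have := v0 k (mem_index_enum _); rewrite paddr_eq0 ?sqr_ge0 // !sqrf_eq0.
by case: (v k 0) => a1 a2 /= /andP[/eqP -> /eqP ->].
Qed.

Lemma redotr0 m (v : 'cV[C]_m) : redot v 0 = 0.
Proof. by rewrite /redot mulmx0 mxE. Qed.

Lemma sqnorm0 m : sqnorm (0 : 'cV[C]_m) = 0. Proof. exact: redotr0. Qed.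

Lemma redotDr m (v w1 w2 : 'cV[C]_m) : redot v (w1 + w2) = redot v w1 + redot v w2.
Proof. by rewrite /redot mulmxDr mxE ReD. Qed.
Lemma redotBr m (v w1 w2 : 'cV[C]_m) : redot v (w1 - w2) = redot v w1 - redot v w2.
Proof. by rewrite /redot mulmxBr !mxE ReB. Qed.
Lemma redotZr m (r : R) (v w : 'cV[C]_m) : redot v ((r%:C)%C *: w) = r * redot v w.
Proof. by rewrite /redot -scalemxAr mxE ReZ. Qed.
Lemma redot_sumr m (I : Type) (s : seq I) (v : 'cV[C]_m) (F : I -> 'cV[C]_m) :
  redot v (\sum_(i <- s) F i) = \sum_(i <- s) redot v (F i).
Proof.
elim: s => [|x s IH]; first by rewrite !big_nil redotr0.
by rewrite !big_cons redotDr IH.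
Qed.

Lemma quadratic_ge0_discr (P S Q : R) : 0 <= P ->
  (forall t, 0 <= P * t ^+ 2 - 2 * S * t + Q) -> S ^+ 2 <= P * Q.
Proof.
move=> P0; have [->|Pn0] := eqVneq P 0 => H.
  have [->|Sn0] := eqVneq S 0; first by rewrite expr0n /= mul0r.
  have := H ((Q + 1) / (2 * S)).
  have -> : 0 * ((Q + 1) / (2 * S)) ^+ 2 - 2 * S * ((Q + 1) / (2 * S)) + Q = -1.
    by field; rewrite Sn0.
  by rewrite oppr_ge0 ler10.
have Pp : 0 < P by rewrite lt0r Pn0.
have := H (S / P).
have -> : P * (S / P) ^+ 2 - 2 * S * (S / P) + Q = Q - S ^+ 2 / P by field.
by rewrite subr_ge0 ler_pdivrMr // mulrC.
Qed.

Lemma redot_CauchySchwarz m (v w : 'cV[C]_m) : redot v w ^+ 2 <= sqnorm v * sqnorm w.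
Proof.
apply: quadratic_ge0_discr; first exact: sqnorm_ge0.
move=> t; rewrite sqnormE redotE sqnormE.
rewrite mulr_suml mulr_sumr mulr_suml -sumrB -big_split /=.
apply: sumr_ge0 => k _.
set a := Re (v k 0); set c := Im (v k 0); set d := Re (w k 0); set e := Im (w k 0).
have -> : (a ^+ 2 + c ^+ 2) * t ^+ 2 - 2 * (a * d + c * e) * t + (d ^+ 2 + e ^+ 2)
  = (t * a - d) ^+ 2 + (t * c - e) ^+ 2 by ring.
by rewrite addr_ge0 ?sqr_ge0.
Qed.

Lemma norm_redot_le m (v w : 'cV[C]_m) :
  `|redot v w| <= Num.sqrt (sqnorm v) * Num.sqrt (sqnorm w).
Proof.
rewrite -sqrtrM ?sqnorm_ge0 // -sqrtr_sqr; apply: ler_wsqrtr.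
exact: redot_CauchySchwarz.
Qed.

Lemma adjmxM m p q (A : 'M[C]_(m, p)) (B : 'M[C]_(p, q)) :
  adjmx (A *m B) = adjmx B *m adjmx A.
Proof. by rewrite /adjmx map_mxM trmx_mul. Qed.

Lemma adjmx_tr m p (A : 'M[C]_(m, p)) : adjmx A^T = (adjmx A)^T.
Proof. by apply/matrixP => i j; rewrite !mxE. Qed.

Lemma sqnorm_isometry m p (U : 'M[C]_(p, m)) v :
  adjmx U *m U = 1%:M -> sqnorm (U *m v) = sqnorm v.
Proof. by move=> UU; rewrite /sqnorm /redot adjmxM -mulmxA (mulmxA (adjmx U)) UU mul1mx. Qed.

End HermitianGeometry.

Section RayleighQuotient.
Variable R : realType.
Local Notation C := R[i].
Local Notation Re := (@complex.Re R).
Local Notation Im := (@complex.Im R).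

Lemma sesqui_adjmx m p (A : 'M[C]_(m, p)) : (A ^t* )%sesqui = adjmx A.
Proof. by rewrite /adjmx map_trmx. Qed.

Lemma hermitian_real_spectral m (A : 'M[C]_m) : adjmx A = A ->
  exists (U : 'M[C]_m) (r : 'I_m -> R),
    [/\ U *m adjmx U = 1%:M, adjmx U *m U = 1%:M &
        A = adjmx U *m diag_mx (\row_k (r k)%:C)%C *m U].
Proof.
move=> hA; set U := spectralmx A; set d := spectral_diag A.
have normA : A \is normalmx by apply/normalmxP; rewrite sesqui_adjmx hA.
have herm : A \is hermsymmx by apply/is_hermitianmxP; rewrite expr0 scale1r sesqui_adjmx hA.
have UU : U \is unitarymx := spectral_unitarymx A.
move/orthomx_spectralP: normA; rewrite -/U -/d invmx_unitary // => AE.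
exists U, (fun k => Re (d 0 k)); split.
- by rewrite -sesqui_adjmx; apply/unitarymxP.
- by rewrite -sesqui_adjmx; have := mulmxKtV (1%:M : 'M[C]_m) UU (erefl _); rewrite mul1mx.
rewrite [LHS]AE sesqui_adjmx; congr (_ *m diag_mx _ *m _); apply/rowP => k.
rewrite mxE RRe_real //; exact: (mxOverP (hermitian_spectral_diag_real herm)).
Qed.

Lemma eigenvalue_unitary_diag m (U : 'M[C]_m) (d : 'rV[C]_m) a :
  U *m adjmx U = 1%:M -> adjmx U *m U = 1%:M ->
  eigenvalue (adjmx U *m diag_mx d *m U) a <-> exists k, a = d 0 k.
Proof.
move=> UUt UtU; split.
  move=> /eigenvalueP [w wA wn0]; set z := w *m adjmx U.
  have zD : z *m diag_mx d = a *: z.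
    have := congr1 (mulmx^~ (adjmx U)) wA.
    by rewrite !mulmxA -(mulmxA _ U) UUt mulmx1 -scalemxAl.
  have zn0 : z != 0.
    apply: contraNneq wn0 => z0.
    by rewrite -[w]mulmx1 -UtU mulmxA -/z z0 mul0mx.
  have [i [k zk]] := matrix0Pn _ zn0; rewrite ord1 in zk; clearbody z.
  exists k; have := congr1 (fun M : 'rV[C]_m => M 0 k) zD; rewrite mul_mx_diag !mxE.
  by rewrite [z 0 k * _]mulrC => /(mulIf zk) ->.
move=> [k ->]; apply/eigenvalueP; exists (row k U).
  by rewrite !mulmxA -row_mul UUt -row_mul mul1mx row_diag_mx -scalemxAl -rowE.
apply/eqP => /(congr1 (mulmx^~ (adjmx U))); rewrite -row_mul UUt mul0mx.
by move/matrixP/(_ 0 k); rewrite !mxE eqxx /= => /eqP; rewrite oner_eq0.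
Qed.

Lemma Re_conj_mul_real (r : R) (a : C) : Re (a^* * (r%:C) * a)%C = r * (Re a ^+ 2 + Im a ^+ 2).
Proof. by case: a => a1 a2 /=; ring. Qed.

Lemma rayleigh_bounds m (A : 'M[C]_m) : adjmx A = A -> forall v : 'cV[C]_m,
  let spec := [set r : R | eigenvalue A (r%:C)%C] in
  inf spec * sqnorm v <= redot v (A *m v) /\ redot v (A *m v) <= sup spec * sqnorm v.
Proof.
move=> /hermitian_real_spectral [U [r [UUt UtU AE]]] v spec.
have specE x : spec x <-> exists k, x = r k.
  rewrite /spec /= AE eigenvalue_unitary_diag //.
  split=> -[k xk]; exists k; last by rewrite xk mxE.
  by have := congr1 Re xk; rewrite mxE.
have bound k : `|r k| <= \sum_j `|r j| by rewrite (bigD1 k) //= lerDl sumr_ge0.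
have spec_lb : has_lbound spec.
  exists (- \sum_j `|r j|) => x /specE [k ->]; rewrite lerNl.
  by rewrite (le_trans _ (bound k)) // -normrN ler_norm.
have spec_ub : has_ubound spec.
  by exists (\sum_j `|r j|) => x /specE [k ->]; exact: le_trans (ler_norm _) (bound k).
set c := U *m v.
have vc : sqnorm v = sqnorm c by rewrite /c sqnorm_isometry.
have Av : redot v (A *m v) = \sum_k r k * (Re (c k 0) ^+ 2 + Im (c k 0) ^+ 2).
  rewrite /redot AE !mulmxA -adjmxM -mulmxA mxE Re_sum; apply: eq_bigr => k _.
  by rewrite mul_mx_diag !mxE Re_conj_mul_real.
rewrite Av vc sqnormE mulr_sumr [X in _ /\ _ <= X]mulr_sumr.
split; apply: ler_sum => k _; apply: ler_wpM2r; rewrite ?addr_ge0 ?sqr_ge0 //.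
- by apply: ge_inf => //; apply/specE; exists k.
- by apply: ub_le_sup => //; apply/specE; exists k.
Qed.

End RayleighQuotient.

Section LocallyFiniteGraph.
Variables (R : realType) (X : countType) (b : X -> X -> R).
Hypotheses (wg : weighted_graph b) (lf : locally_finite b).

Lemma weight_ge0 x y : 0 <= b x y. Proof. by case: wg. Qed.
Lemma weight_diag x : b x x = 0. Proof. by case: wg. Qed.
Lemma weightC x y : b x y = b y x. Proof. by case: wg. Qed.

Definition nbrs x : seq X := undup (projT1 (cid (proj1 (finite_seqP _) (lf x)))).

Lemma mem_nbrs x y : (y \in nbrs x) = (0 < b x y).
Proof.
rewrite /nbrs mem_undup; case: cid => s /= E.
apply/idP/idP => H; first by have : [set` s] y by []; rewrite -E.
by have : [set y | 0 < b x y] y by []; rewrite E.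
Qed.

Lemma nbrs_uniq x : uniq (nbrs x). Proof. exact: undup_uniq. Qed.
Lemma nbrsC x y : (y \in nbrs x) = (x \in nbrs y). Proof. by rewrite !mem_nbrs weightC. Qed.
Lemma nbrs_irr x : x \notin nbrs x. Proof. by rewrite mem_nbrs weight_diag ltxx. Qed.
Lemma nbrs_neq x y : y \in nbrs x -> y != x.
Proof. by apply: contraTneq => ->; exact: nbrs_irr. Qed.

Lemma weight_nbrs0 x y : y \notin nbrs x -> b x y = 0.
Proof. by rewrite mem_nbrs => H; apply/eqP; rewrite eq_le weight_ge0 andbT leNgt. Qed.

Lemma deg_sum r x : uniq r -> {subset nbrs x <= r} -> deg b x = \sum_(y <- r) b x y.
Proof.
move=> ur xr; rewrite /deg (esumT_uniq (r := r)) // => [y|y yr]; first exact: weight_ge0.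
by apply: weight_nbrs0; apply: contra yr; apply: xr.
Qed.

Lemma sum_nbrs_widen r y (F : X -> R) : uniq r -> {subset nbrs y <= r} ->
  \sum_(z <- nbrs y) b y z * F z = \sum_(z <- r) b y z * F z.
Proof.
move=> ur yr; apply: big_uniq_widen => // [|z zy]; first exact: nbrs_uniq.
by rewrite weight_nbrs0 // mul0r.
Qed.

Definition nbhd (s : seq X) := undup (s ++ flatten (map nbrs s)).

Lemma nbhd_uniq s : uniq (nbhd s). Proof. exact: undup_uniq. Qed.
Lemma mem_nbhd s x : x \in s -> x \in nbhd s.
Proof. by move=> xs; rewrite mem_undup mem_cat xs. Qed.
Lemma mem_nbhd_nbrs s x y : x \in s -> y \in nbrs x -> y \in nbhd s.
Proof.
move=> xs ynb; rewrite mem_undup mem_cat; apply/orP; right.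
by apply/flattenP; exists (nbrs x) => //; apply/mapP; exists x.
Qed.

Lemma exists_boundary_edge (P : pred X) (s : seq X) x :
  all_components_infinite b -> P x -> (forall y, P y -> y \in s) ->
  exists p q, [/\ P p, ~~ P q & 0 < b p q].
Proof.
move=> ci Px Ps.
have [z [xz zs]] : exists z, gconnected b x z /\ z \notin s.
  apply: contrapT => H; apply: (ci x); apply: (sub_finite_set _ (finite_seq s)).
  by move=> z xz /=; apply/negPn/negP => zs; apply: H; exists z.
have Pz : ~~ P z by apply: contra zs; exact: Ps.
elim: xz Px Pz => [a y ay Pa nPy|y Py nPy|a y c _ IH1 _ IH2 Pa nPc].
- by exists a, y.
- by rewrite Py in nPy.
- by have [Py|nPy] := boolP (P y); [exact: IH2 | exact: IH1].
Qed.

End LocallyFiniteGraph.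

Section FiniteQuadraticForm.
Variables (R : realType) (X : countType) (b : X -> X -> R).
Hypotheses (wg : weighted_graph b) (lf : locally_finite b).

Definition edge_sum (r : seq X) (F : X -> X -> R) :=
  \sum_(y <- r) \sum_(z <- r) b y z * F y z.

Definition qform_on (r : seq X) (V : X -> R) (h : X -> R) :=
  2^-1 * edge_sum r (fun y z => (h y - h z) ^+ 2) + \sum_(y <- r) h y ^+ 2 * V y.

Lemma eq_edge_sum r F G : (forall y z, F y z = G y z) -> edge_sum r F = edge_sum r G.
Proof. by move=> FG; apply: eq_bigr => y _; apply: eq_bigr => z _; rewrite FG. Qed.

Lemma edge_sumD r F G :
  edge_sum r (fun y z => F y z + G y z) = edge_sum r F + edge_sum r G.
Proof.
rewrite /edge_sum -big_split; apply: eq_bigr => y _; rewrite -big_split.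
by apply: eq_bigr => z _; rewrite mulrDr.
Qed.

Lemma edge_sumZ r c F : edge_sum r (fun y z => c * F y z) = c * edge_sum r F.
Proof.
rewrite /edge_sum mulr_sumr; apply: eq_bigr => y _; rewrite mulr_sumr.
by apply: eq_bigr => z _; rewrite mulrCA.
Qed.

Lemma edge_sumN r F : edge_sum r (fun y z => - F y z) = - edge_sum r F.
Proof. by rewrite -mulN1r -edge_sumZ; apply: eq_edge_sum => y z; rewrite mulN1r. Qed.

Lemma edge_sum_swap r F : edge_sum r (fun y z => F z y) = edge_sum r F.
Proof.
rewrite /edge_sum exchange_big; apply: eq_bigr => y _; apply: eq_bigr => z _.
by rewrite (weightC wg).
Qed.

Lemma qform_onE r V h : qform_on r V h =
  edge_sum r (fun y z => h y ^+ 2) - edge_sum r (fun y z => h y * h z)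
  + \sum_(y <- r) h y ^+ 2 * V y.
Proof.
rewrite /qform_on (@eq_edge_sum _ _
  (fun y z => (h y ^+ 2 - h y * h z) + (h z ^+ 2 - h z * h y))); last by move=> y z; ring.
rewrite edge_sumD (edge_sum_swap r (fun y z => h y ^+ 2 - h y * h z)) edge_sumD edge_sumN.
by congr (_ + _); field.
Qed.

Lemma qform_on_vertex_sum r V h : qform_on r V h =
  \sum_(y <- r) (\sum_(z <- r) b y z * (h y ^+ 2 - h y * h z) + V y * h y ^+ 2).
Proof.
rewrite qform_onE big_split /=; congr (_ + _); last first.
  by apply: eq_bigr => y _; rewrite mulrC.
rewrite -edge_sumN -edge_sumD; apply: eq_bigr => y _; apply: eq_bigr => z _.
by rewrite mulrBr.
Qed.

Lemma vertex_sum_eq0 r V (h : X -> R) y : h y = 0 ->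
  \sum_(z <- r) b y z * (h y ^+ 2 - h y * h z) + V y * h y ^+ 2 = 0.
Proof.
move=> hy; rewrite hy expr0n mulr0 addr0 big1 // => z _.
by rewrite mul0r subrr mulr0.
Qed.

Lemma normc_real_sqr (c : R) : Normc.normc ((c%:C)%C) ^+ 2 = c ^+ 2.
Proof. by rewrite /Normc.normc /= expr0n addr0 sqr_sqrtr // sqr_ge0. Qed.

Lemma normcB_real_sqr (c d : R) : Normc.normc ((c%:C - d%:C)%C) ^+ 2 = (c - d) ^+ 2.
Proof. by rewrite /Normc.normc /= subrr expr0n /= addr0 sqr_sqrtr // sqr_ge0. Qed.

Lemma nbhd_edge s (h : X -> R) y z : (forall x, x \notin s -> h x = 0) ->
  b y z * (h y - h z) ^+ 2 != 0 -> (y \in nbhd lf s) && (z \in nbhd lf s).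
Proof.
move=> hs; rewrite mulf_eq0 negb_or sqrf_eq0 subr_eq0 => /andP[byz hyz].
have yz : z \in nbrs lf y by rewrite mem_nbrs lt0r byz (weight_ge0 wg).
have [ys|ys] := boolP (y \in s).
  by rewrite mem_nbhd //= (mem_nbhd_nbrs ys yz).
have zs : z \in s by apply: contraR hyz => zs; rewrite !hs.
by rewrite (mem_nbhd lf zs) andbT (mem_nbhd_nbrs zs) // -(nbrsC wg).
Qed.

Lemma qform_real_finsupp V (h : X -> R) s : (forall x, x \notin s -> h x = 0) ->
  qform b V (fun x => (h x)%:C%C) = (qform_on (nbhd lf s) V h)%:E.
Proof.
move=> hs; set r := nbhd lf s; rewrite /qform.
rewrite (esumT_uniq (r := [seq (y, z) | y <- r, z <- r])); last 3 first.
- by move=> p; rewrite mulr_ge0 ?(weight_ge0 wg) ?sqr_ge0.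
- by rewrite allpairs_uniq ?nbhd_uniq // => -[? ?] [? ?] _ _ [-> ->].
- move=> [y z] yz /=; rewrite normcB_real_sqr; apply/eqP; apply: contraNT yz.
  by move=> /(nbhd_edge hs)/andP[yr zr]; apply: allpairs_f.
rewrite (fsbigT_uniq (nbhd_uniq lf s)); last first.
  move=> x xr; rewrite hs ?normc_real_sqr ?expr0n ?mul0r //.
  by apply: contra xr; exact: mem_nbhd.
rewrite big_allpairs -EFinM -EFinD; congr (_%:E); congr (_ * _ + _).
  by apply: eq_bigr => y _; apply: eq_bigr => z _ /=; rewrite normcB_real_sqr.
by apply: eq_bigr => x _; rewrite normc_real_sqr.
Qed.

Lemma qform_on_ge0 V (h : X -> R) s : qform_nonneg b V ->
  (forall x, x \notin s -> h x = 0) -> 0 <= qform_on (nbhd lf s) V h.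
Proof.
move=> qV hs; rewrite -lee_fin -(qform_real_finsupp V hs); apply: qV.
apply: (sub_finite_set _ (finite_seq s)) => x /= hx; apply/negPn/negP => xs.
by move: hx; rewrite hs ?eqxx.
Qed.

Lemma qform_on_shift r V (w d : X -> R) t : qform_on r V (fun y => w y + t * d y) =
  qform_on r V w + 2 * t * (2^-1 * edge_sum r (fun y z => (w y - w z) * (d y - d z))
     + \sum_(y <- r) w y * d y * V y) + t ^+ 2 * qform_on r V d.
Proof.
rewrite /qform_on (@eq_edge_sum _ _ (fun y z => ((w y - w z) ^+ 2
   + (2 * t) * ((w y - w z) * (d y - d z))) + t ^+ 2 * (d y - d z) ^+ 2)); last first.
  by move=> y z; ring.
rewrite !edge_sumD !edge_sumZ.
have -> : \sum_(y <- r) (w y + t * d y) ^+ 2 * V y = \sum_(y <- r) w y ^+ 2 * V y +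
    2 * t * \sum_(y <- r) w y * d y * V y + t ^+ 2 * \sum_(y <- r) d y ^+ 2 * V y.
  by rewrite !mulr_sumr -!big_split; apply: eq_bigr => y _ /=; ring.
ring.
Qed.

Lemma qform_on_bump_slope r V (w : X -> R) x0 : uniq r -> x0 \in r -> w x0 = 0 ->
  let d y : R := (y == x0)%:R in
  2^-1 * edge_sum r (fun y z => (w y - w z) * (d y - d z)) + \sum_(y <- r) w y * d y * V y
  = - \sum_(z <- r) b x0 z * w z.
Proof.
move=> ur x0r wx0 d.
have edge_d F : edge_sum r (fun y z => F y z * d y) = \sum_(z <- r) b x0 z * F x0 z.
  rewrite /edge_sum (bigD1_seq x0 x0r ur) /= [X in _ + X]big1 ?addr0.
    by apply: eq_bigr => z _; rewrite /d eqxx mulr1.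
  by move=> y yx; rewrite big1 // => z _; rewrite /d (negbTE yx) !mulr0.
rewrite (@eq_edge_sum _ _ (fun y z => (w y - w z) * d y + (w z - w y) * d z)); last first.
  by move=> y z; ring.
rewrite edge_sumD (edge_sum_swap r (fun y z => (w y - w z) * d y)) edge_d.
have -> : \sum_(y <- r) w y * d y * V y = 0.
  rewrite big_seq big1 // => y _; rewrite /d.
  by have [->|_] := eqVneq y x0; rewrite ?wx0 ?mulr0 !mul0r.
have -> : \sum_(z <- r) b x0 z * (w x0 - w z) = - \sum_(z <- r) b x0 z * w z.
  by rewrite -sumrN; apply: eq_bigr => z _; rewrite wx0 sub0r mulrN.
by rewrite addr0; field.
Qed.

Lemma exists_qform_on_bump_lt0 r V (w : X -> R) x0 y0 : uniq r -> x0 \in r -> y0 \in r ->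
  w x0 = 0 -> 0 < b x0 y0 -> 0 < w y0 -> (forall y, 0 <= w y) -> qform_on r V w <= 0 ->
  exists t, qform_on r V (fun y => w y + t * (y == x0)%:R) < 0.
Proof.
move=> ur x0r y0r wx0 bxy wy0 w_ge0 qw.
set beta := \sum_(z <- r) b x0 z * w z.
have beta_gt0 : 0 < beta.
  rewrite /beta (bigD1_seq y0 y0r ur) /= ltr_pwDl ?mulr_gt0 // sumr_ge0 // => z _.
  by rewrite mulr_ge0 ?(weight_ge0 wg).
set Q := qform_on r V (fun y => (y == x0)%:R).
exists (beta / (`|Q| + 1)); rewrite qform_on_shift qform_on_bump_slope // -/beta -/Q.
set t := beta / (`|Q| + 1).
have t_gt0 : 0 < t by rewrite divr_gt0 // ltr_wpDl.
have tQ : t ^+ 2 * Q <= t * beta.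
  have -> : t * beta = t ^+ 2 * (`|Q| + 1) by rewrite /t; field; rewrite gt_eqF // ltr_wpDl.
  by rewrite ler_wpM2l ?sqr_ge0 // (le_trans (ler_norm _)) // lerDl.
have tb : 0 < t * beta by rewrite mulr_gt0.
lra.
Qed.

End FiniteQuadraticForm.

Section BundleSections.
Context {R : realType} {X : countType} {n : X -> nat}.
Local Notation C := R[i].
Local Notation section := (forall x : X, 'cV[C]_(n x)).

Definition supported_in (u : section) (s : seq X) := forall x, x \notin s -> u x = 0.
Definition finitely_supported (u : section) := exists s, supported_in u s.

Definition sub_scale (u : section) (c : C) (v : section) : section := fun x => u x - c *: v x.

Lemma finitely_supported_sub_scale u c v :
  finitely_supported u -> finitely_supported v -> finitely_supported (sub_scale u c v).
Proof.
move=> [s1 us1] [s2 vs2]; exists (s1 ++ s2) => x.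
by rewrite mem_cat negb_or => /andP[x1 x2]; rewrite /sub_scale us1 // vs2 // scaler0 subr0.
Qed.

Lemma supported_in_subset (u : section) s s' :
  supported_in u s -> {subset s <= s'} -> supported_in u s'.
Proof. by move=> us ss' x xs'; apply: us; apply: contra xs'; apply: ss'. Qed.

Definition fnorm (u : section) x : R := Num.sqrt (sqnorm (u x)).

Lemma fnorm_ge0 (u : section) y : 0 <= fnorm u y. Proof. exact: sqrtr_ge0. Qed.
Lemma fnorm_sqr (u : section) y : fnorm u y ^+ 2 = sqnorm (u y).
Proof. by rewrite sqr_sqrtr // sqnorm_ge0. Qed.
Lemma fnorm0 (u : section) y : u y = 0 -> fnorm u y = 0.
Proof. by move=> uy; rewrite /fnorm uy sqnorm0 sqrtr0. Qed.
Lemma fnorm_gt0 (u : section) y : u y != 0 -> 0 < fnorm u y.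
Proof.
move=> uy; rewrite sqrtr_gt0 lt0r sqnorm_ge0 andbT.
by apply: contra uy => /eqP/sqnorm_eq0 ->.
Qed.

End BundleSections.

Section MagneticOperator.
Variables (R : realType) (X : countType) (b : X -> X -> R) (n : X -> nat).
Hypotheses (wg : weighted_graph b) (lf : locally_finite b).
Variables (Phi : forall x y : X, 'M[R[i]]_(n x, n y)) (W : forall x : X, 'M[R[i]]_(n x)).
Local Notation C := R[i].
Local Notation section := (forall x : X, 'cV[C]_(n x)).
Local Notation M := (magnetic b Phi W).

Lemma magneticE (f : section) x :
  M f x = \sum_(y <- nbrs lf x) ((b x y)%:C)%C *: (f x - Phi x y *m f y) + W x *m f x.
Proof.
rewrite /magnetic (fsbigT_uniq (nbrs_uniq lf x)) // => y yx.
by rewrite (weight_nbrs0 wg yx) scale0r.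
Qed.

Lemma magnetic_sub_scale u c v y : M (sub_scale u c v) y = M u y - c *: M v y.
Proof.
rewrite !magneticE /sub_scale scalerDr scaler_sumr opprD addrACA -sumrB.
congr (_ + _); last by rewrite mulmxBr scalemxAr.
apply: eq_bigr => z _; rewrite scalerA mulrC -scalerA -scalerBr; congr (_ *: _).
rewrite mulmxBr -scalemxAr scalerBr !opprB [LHS]addrACA [RHS]addrACA.
by congr (_ + _); exact: addrC.
Qed.

Lemma magnetic_eq0 u y : u y = 0 -> (forall z, z \in nbrs lf y -> u z = 0) -> M u y = 0.
Proof.
move=> uy unb; rewrite magneticE uy mulmx0 addr0 big_seq big1 // => z zy.
by rewrite unb // mulmx0 subrr scaler0.
Qed.

Lemma magnetic_supported u s : supported_in u s -> supported_in (M u) (nbhd lf s).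
Proof.
move=> us y ys; apply: magnetic_eq0 => [|z zy]; apply: us; apply: contra ys.
  exact: mem_nbhd.
by move=> zs; apply: (mem_nbhd_nbrs zs); rewrite (nbrsC wg).
Qed.

End MagneticOperator.

Section Injectivity.
Variables (R : realType) (X : countType) (b : X -> X -> R) (n : X -> nat)
  (Phi : forall x y : X, 'M[R[i]]_(n x, n y)) (W : forall x : X, 'M[R[i]]_(n x)).
Hypotheses (wg : weighted_graph b) (lf : locally_finite b)
  (conn : connection Phi) (sa : selfadjoint_endo W).
Local Notation C := R[i].
Local Notation section := (forall x : X, 'cV[C]_(n x)).
Local Notation M := (magnetic b Phi W).
Local Notation nbrs := (nbrs lf).

Lemma redot_magnetic (u : section) y : redot (u y) (M u y) =
  \sum_(z <- nbrs y) b y z * (sqnorm (u y) - redot (u y) (Phi y z *m u z))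
  + redot (u y) (W y *m u y).
Proof.
rewrite (magneticE wg) redotDr redot_sumr; congr (_ + _).
by apply: eq_bigr => z _; rewrite redotZr redotBr.
Qed.

Lemma norm_redot_connection (u : section) y z :
  `|redot (u y) (Phi y z *m u z)| <= fnorm u y * fnorm u z.
Proof.
have [_ PP _ _] := conn y z.
by rewrite /fnorm -(sqnorm_isometry (u z) PP); exact: norm_redot_le.
Qed.

Lemma kato_Wmin (u : section) y : M u y = 0 ->
  \sum_(z <- nbrs y) b y z * (fnorm u y ^+ 2 - fnorm u y * fnorm u z)
  + Wmin W y * fnorm u y ^+ 2 <= 0.
Proof.
move=> Mu; have [W_ge _] := rayleigh_bounds (sa y) (u y).
rewrite fnorm_sqr -[X in _ <= X](redotr0 (u y)) -Mu redot_magnetic lerD //.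
apply: ler_sum => z _; rewrite ler_wpM2l ?(weight_ge0 wg) // lerB //.
exact: le_trans (ler_norm _) (norm_redot_connection u y z).
Qed.

Lemma kato_Wmax (u : section) y : M u y = 0 ->
  0 <= \sum_(z <- nbrs y) b y z * (fnorm u y ^+ 2 + fnorm u y * fnorm u z)
  + Wmax W y * fnorm u y ^+ 2.
Proof.
move=> Mu; have [_ W_le] := rayleigh_bounds (sa y) (u y).
rewrite fnorm_sqr -[X in X <= _](redotr0 (u y)) -Mu redot_magnetic lerD //.
apply: ler_sum => z _; rewrite ler_wpM2l ?(weight_ge0 wg) // lerD //.
by apply: le_trans (ler_norm _) _; rewrite normrN norm_redot_connection.
Qed.

Lemma qform_on_fnorm_Wmin_le0 (u : section) s r : supported_in u s -> uniq r ->
  (forall y, y \in s -> {subset nbrs y <= r}) -> (forall y, M u y = 0) ->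
  qform_on b r (Wmin W) (fnorm u) <= 0.
Proof.
move=> us ur nbr Mu; rewrite (qform_on_vertex_sum wg); apply: sumr_le0 => y _.
have [ys|/us/fnorm0 uy] := boolP (y \in s); last by rewrite vertex_sum_eq0.
by rewrite -(sum_nbrs_widen wg _ ur (nbr y ys)); exact: kato_Wmin.
Qed.

Lemma qform_on_fnorm_Wmax_le0 (u : section) s r : supported_in u s -> uniq r ->
  (forall y, y \in s -> {subset nbrs y <= r}) -> (forall y, M u y = 0) ->
  qform_on b r (fun x => - Wmax W x - 2 * deg b x) (fnorm u) <= 0.
Proof.
move=> us ur nbr Mu; rewrite (qform_on_vertex_sum wg); apply: sumr_le0 => y _.
have [ys|/us/fnorm0 uy] := boolP (y \in s).
  2: by rewrite (vertex_sum_eq0 _ _ (fun x => - Wmax W x - 2 * deg b x)).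
(* With [deg b y = \sum_z b y z], the vertex term is minus the bound of [kato_Wmax]. *)
have := kato_Wmax (Mu y).
rewrite (deg_sum wg ur (nbr y ys)) !(sum_nbrs_widen wg _ ur (nbr y ys)).
set w := fnorm u; set A := \sum_(z <- r) b y z * w y ^+ 2.
set B := \sum_(z <- r) b y z * (w y * w z).
have -> : \sum_(z <- r) b y z * (w y ^+ 2 + w y * w z) = A + B.
  by rewrite -big_split; apply: eq_bigr => z _; rewrite mulrDr.
have -> : \sum_(z <- r) b y z * (w y ^+ 2 - w y * w z) = A - B.
  by rewrite -sumrB; apply: eq_bigr => z _; rewrite mulrBr.
have : (\sum_(z <- r) b y z) * w y ^+ 2 = A by rewrite mulr_suml.
lra.
Qed.

Theorem magnetic_injective : all_components_infinite b ->
  qform_nonneg b (Wmin W) \/ qform_nonneg b (fun x => - Wmax W x - 2 * deg b x) ->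
  forall u : section, finitely_supported u -> (forall y, M u y = 0) -> forall x, u x = 0.
Proof.
move=> ci hq u [s us] Mu x; apply/eqP/negPn/negP => ux.
have in_s y : u y != 0 -> y \in s by apply: contraR => ys; rewrite us.
have [p [q [up /negPn/eqP uq bpq]]] := exists_boundary_edge ci ux in_s.
set r := nbhd lf (q :: s); have ur : uniq r := nbhd_uniq lf (q :: s).
have qr : q \in r by apply: mem_nbhd; rewrite mem_head.
have pr : p \in r by apply: mem_nbhd; rewrite in_cons in_s ?orbT.
have nbr y : y \in s -> {subset nbrs y <= r}.
  by move=> ys z; apply: mem_nbhd_nbrs; rewrite in_cons ys orbT.
have bump_ge0 V : qform_nonneg b V ->
    forall t, 0 <= qform_on b r V (fun y => fnorm u y + t * (y == q)%:R).
  move=> qV t; apply: (qform_on_ge0 wg) qV _ => y; rewrite in_cons negb_or.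
  by case/andP=> yq ys; rewrite fnorm0 ?us // (negbTE yq) mulr0 addr0.
have bqp : 0 < b q p by rewrite (weightC wg).
have bump := exists_qform_on_bump_lt0 wg ur qr pr (fnorm0 uq) bqp (fnorm_gt0 up) (fnorm_ge0 u).
case: hq => [qV|qV].
- have [t] := bump _ (qform_on_fnorm_Wmin_le0 us ur nbr Mu).
  by rewrite ltNge bump_ge0.
- have [t] := bump _ (qform_on_fnorm_Wmax_le0 us ur nbr Mu).
  by rewrite ltNge bump_ge0.
Qed.

End Injectivity.

Section Transpose.
Variables (R : realType) (X : countType) (n : X -> nat)
  (Phi : forall x y : X, 'M[R[i]]_(n x, n y)) (W : forall x : X, 'M[R[i]]_(n x)).

Definition connection_tr x y : 'M[R[i]]_(n x, n y) := (Phi y x)^T.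

Lemma connection_trP : connection Phi -> connection connection_tr.
Proof.
move=> conn x y; have [PPt PtP PP' P'P] := conn y x.
by rewrite /connection_tr !adjmx_tr -!trmx_mul PtP PPt P'P PP' !trmx1.
Qed.

Lemma selfadjoint_tr : selfadjoint_endo W -> selfadjoint_endo (fun x => (W x)^T).
Proof. by move=> sa x; rewrite adjmx_tr sa. Qed.

Lemma eigenvalue_tr_selfadjoint m (A : 'M[R[i]]_m) (r : R) :
  adjmx A = A -> eigenvalue A^T (r%:C)%C = eigenvalue A (r%:C)%C.
Proof.
move=> hA; have -> : A^T = map_mx (@conjc R) A by rewrite -[in LHS]hA /adjmx trmxK.
by rewrite -{1}(conjc_real r) (eigenvalue_map (@conjc R)).
Qed.

Lemma real_eigenvalues_tr : selfadjoint_endo W -> forall x,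
  [set r : R | eigenvalue (W x)^T (r%:C)%C] = [set r : R | eigenvalue (W x) (r%:C)%C].
Proof.
move=> sa x; apply/seteqP; split => r /=; by rewrite (eigenvalue_tr_selfadjoint _ (sa x)).
Qed.

Lemma Wmin_tr : selfadjoint_endo W -> Wmin (fun x => (W x)^T) = Wmin W.
Proof. by move=> sa; apply: funext => x; exact: (congr1 inf (real_eigenvalues_tr sa x)). Qed.

Lemma Wmax_tr : selfadjoint_endo W -> Wmax (fun x => (W x)^T) = Wmax W.
Proof. by move=> sa; apply: funext => x; exact: (congr1 sup (real_eigenvalues_tr sa x)). Qed.

End Transpose.

Section BilinearPairing.
Variable R : realType.
Local Notation C := R[i].

Definition bdot m (v w : 'cV[C]_m) : C := (v^T *m w) 0 0.

Lemma bdotE m (v w : 'cV[C]_m) : bdot v w = \sum_k v k 0 * w k 0.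
Proof. by rewrite /bdot mxE; apply: eq_bigr => k _; rewrite mxE. Qed.
Lemma bdot_trmx m p (A : 'M[C]_(p, m)) v w : bdot (A^T *m v) w = bdot v (A *m w).
Proof. by rewrite /bdot trmx_mul trmxK mulmxA. Qed.
Lemma bdotDl m (v1 v2 w : 'cV[C]_m) : bdot (v1 + v2) w = bdot v1 w + bdot v2 w.
Proof. by rewrite /bdot linearD mulmxDl mxE. Qed.
Lemma bdotBl m (v1 v2 w : 'cV[C]_m) : bdot (v1 - v2) w = bdot v1 w - bdot v2 w.
Proof. by rewrite /bdot linearB mulmxBl !mxE. Qed.
Lemma bdotZl m c (v w : 'cV[C]_m) : bdot (c *: v) w = c * bdot v w.
Proof. by rewrite /bdot linearZ -scalemxAl mxE. Qed.
Lemma bdot0l m (w : 'cV[C]_m) : bdot 0 w = 0.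
Proof. by rewrite /bdot linear0 mul0mx mxE. Qed.
Lemma bdot_suml m (I : Type) (r : seq I) (F : I -> 'cV[C]_m) w :
  bdot (\sum_(z <- r) F z) w = \sum_(z <- r) bdot (F z) w.
Proof.
elim: r => [|z r IH]; first by rewrite !big_nil bdot0l.
by rewrite !big_cons bdotDl IH.
Qed.

End BilinearPairing.

Section Coordinates.
Context {R : realType} {X : countType} {n : X -> nat}.
Local Notation C := R[i].
Local Notation section := (forall x : X, 'cV[C]_(n x)).
Local Notation index := {x : X & 'I_(n x)}.

Definition index_of x (k : 'I_(n x)) : index := Tagged (fun x => 'I_(n x)) k.

Definition section_coord (u : section) (j : nat) : C :=
  if @pickle_inv index j is Some p then u (tag p) (tagged p) 0 else 0.

Definition section_of_coords (a : nat -> C) : section :=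
  fun x => \col_(k < n x) a (pickle (index_of k)).

Definition indices (s : seq X) : seq index :=
  flatten [seq [seq index_of k | k <- index_enum 'I_(n x)] | x <- s].

Definition coord_bound s := (\max_(p <- indices s) pickle p).+1.

Lemma coord_index_of u x k : section_coord u (pickle (index_of k)) = u x k 0.
Proof. by rewrite /section_coord pickleK_inv. Qed.

Lemma index_of_inj x : injective (@index_of x).
Proof. by move=> k1 k2 /eqP; rewrite eq_Tagged => /eqP. Qed.

Lemma mem_indices s p : (p \in indices s) = (tag p \in s).
Proof.
apply/flattenP/idP => [[l /mapP[x xs ->] /mapP[k _ ->]] //|ps].
exists [seq index_of k | k <- index_enum 'I_(n (tag p))].
  by apply/mapP; exists (tag p).
by apply/mapP; exists (tagged p); rewrite ?mem_index_enum //; case: p {ps}.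
Qed.

Lemma indices_uniq s : uniq s -> uniq (indices s).
Proof.
elim: s => //= x s IH /andP[xs us]; rewrite cat_uniq IH // andbT.
rewrite (map_inj_uniq (@index_of_inj x)) ?index_enum_uniq //=.
apply/hasPn => p; rewrite mem_indices => ps; apply/mapP => -[k _ pk].
by move: ps; rewrite pk /= (negbTE xs).
Qed.

Lemma pickle_lt_coord_bound s p : p \in indices s -> (pickle p < coord_bound s)%N.
Proof. by move=> ps; rewrite ltnS; apply: (@leq_bigmax_seq _ _ xpredT). Qed.

Lemma coord_eq0 u s j : supported_in u s -> j \notin map pickle (indices s) ->
  section_coord u j = 0.
Proof.
move=> us js; rewrite /section_coord; case E: pickle_inv => [p|] //.
have pj : pickle p = j by have := @pickle_invK index j; rewrite E.
rewrite us ?mxE //; apply: contra js => ps.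
by apply/mapP; exists p; rewrite ?mem_indices.
Qed.

Lemma coord_supported u s j : supported_in u s -> (coord_bound s <= j)%N ->
  section_coord u j = 0.
Proof.
move=> us sj; apply: coord_eq0 us _; apply/mapP => -[p ps pj].
by move: (pickle_lt_coord_bound ps); rewrite -pj ltnNge sj.
Qed.

Lemma sum_coord u s (a : nat -> C) N : uniq s -> supported_in u s ->
  (coord_bound s <= N)%N ->
  \sum_(j < N) section_coord u j * a j = \sum_(x <- s) bdot (u x) (section_of_coords a x).
Proof.
move=> us su sN; rewrite -(big_mkord xpredT (fun j => section_coord u j * a j)).
rewrite (bigID (mem (map pickle (indices s)))) /= [X in _ + X]big1 ?addr0; last first.
  by move=> j js; rewrite (coord_eq0 su js) mul0r.
rewrite -big_filter (perm_big (map pickle (indices s))); last first.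
  apply: uniq_perm; first by rewrite filter_uniq // iota_uniq.
    by rewrite (map_inj_uniq (pcan_inj (@pickleK_inv index))) indices_uniq.
  move=> j; rewrite mem_filter; apply/andP/idP => [[]//|js]; split => //.
  case/mapP: js => p ps ->; rewrite mem_index_iota /=.
  exact: leq_trans (pickle_lt_coord_bound ps) sN.
rewrite big_map big_flatten big_map; apply: eq_bigr => x _.
rewrite big_map bdotE; apply: eq_bigr => k _.
by rewrite coord_index_of mxE.
Qed.

Definition unit_section x (i : 'I_(n x)) : section :=
  fun y => \col_(k < n y) (index_of k == index_of i)%:R.

Lemma unit_section_neq x (i : 'I_(n x)) y : y != x -> unit_section i y = 0.
Proof.
move=> yx; apply/matrixP => k l; rewrite !mxE.
by case: eqP => // /(congr1 tag) /= yx'; rewrite yx' eqxx in yx.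
Qed.

Lemma unit_section_supported x (i : 'I_(n x)) : supported_in (unit_section i) [:: x].
Proof. by move=> y; rewrite inE => yx; apply: unit_section_neq. Qed.

Lemma bdot_unit_section x (i : 'I_(n x)) w : bdot (unit_section i x) w = w i 0.
Proof.
rewrite bdotE (bigD1 i) //= big1 => [|k ki]; rewrite !mxE eq_Tagged.
  by rewrite eqxx mul1r addr0.
by rewrite (negbTE ki) mul0r.
Qed.

Definition pairing (g v : section) : C := \sum_(x \in [set: X]) bdot (v x) (g x).

Lemma pairing_seq g v s : uniq s -> supported_in v s ->
  pairing g v = \sum_(x <- s) bdot (v x) (g x).
Proof. by move=> us vs; rewrite /pairing (fsbigT_uniq us) // => x /vs ->; rewrite bdot0l. Qed.

Lemma pairing_sub_scale g u c v : finitely_supported u -> finitely_supported v ->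
  pairing g (sub_scale u c v) = pairing g u - c * pairing g v.
Proof.
move=> [s1 us1] [s2 vs2]; set s := undup (s1 ++ s2); have ss : uniq s := undup_uniq _.
have s1s : {subset s1 <= s} by move=> x; rewrite mem_undup mem_cat => ->.
have s2s : {subset s2 <= s} by move=> x; rewrite mem_undup mem_cat orbC => ->.
have us := supported_in_subset us1 s1s; have vs := supported_in_subset vs2 s2s.
have uvs : supported_in (sub_scale u c v) s.
  by move=> x xs; rewrite /sub_scale us // vs // scaler0 subr0.
rewrite !(pairing_seq g ss) // mulr_sumr -sumrB; apply: eq_bigr => x _.
by rewrite bdotBl bdotZl.
Qed.

Lemma pairing_unit_section g x (i : 'I_(n x)) : pairing g (unit_section i) = g x i 0.
Proof.
rewrite (pairing_seq g _ (unit_section_supported i)) //.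
by rewrite big_cons big_nil addr0 bdot_unit_section.
Qed.

End Coordinates.

Section Duality.
Variables (R : realType) (X : countType) (b : X -> X -> R) (n : X -> nat)
  (Phi : forall x y : X, 'M[R[i]]_(n x, n y)) (W : forall x : X, 'M[R[i]]_(n x)).
Hypotheses (wg : weighted_graph b) (lf : locally_finite b).
Local Notation C := R[i].
Local Notation section := (forall x : X, 'cV[C]_(n x)).
Local Notation M := (magnetic b Phi W).
(* The transpose of [M] with respect to the bilinear pairing [bdot]. *)
Local Notation Mt := (magnetic b (connection_tr Phi) (fun x => (W x)^T)).
Local Notation nbrs := (nbrs lf).

Lemma bdot_magnetic_tr (u : section) y w : bdot (Mt u y) w =
  \sum_(z <- nbrs y) ((b y z)%:C)%C * (bdot (u y) w - bdot (u z) (Phi z y *m w))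
  + bdot (u y) (W y *m w).
Proof.
rewrite (magneticE wg) bdotDl bdot_trmx bdot_suml; congr (_ + _).
by apply: eq_bigr => z _; rewrite bdotZl bdotBl /connection_tr bdot_trmx.
Qed.

Lemma bdot_magnetic_tr_unit_self (f : section) x (i : 'I_(n x)) :
  bdot (Mt (unit_section i) x) (f x) =
  \sum_(z <- nbrs x) ((b x z)%:C)%C * f x i 0 + (W x *m f x) i 0.
Proof.
rewrite bdot_magnetic_tr !bdot_unit_section; congr (_ + _).
rewrite big_seq [RHS]big_seq; apply: eq_bigr => z zx.
by rewrite unit_section_neq ?bdot0l ?subr0 // (nbrs_neq wg).
Qed.

Lemma bdot_magnetic_tr_unit_nbr (f : section) x (i : 'I_(n x)) y : y \in nbrs x ->
  bdot (Mt (unit_section i) y) (f y) = - (((b x y)%:C)%C * (Phi x y *m f y) i 0).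
Proof.
move=> yx; have xy : x \in nbrs y by rewrite -(nbrsC wg).
rewrite bdot_magnetic_tr (unit_section_neq _ (nbrs_neq wg yx)) !bdot0l addr0.
rewrite (bigD1_seq x xy (nbrs_uniq lf y)) /= bdot_unit_section sub0r (weightC wg).
rewrite big1 ?addr0 ?mulrN // => z zx.
by rewrite unit_section_neq // !bdot0l subrr mulr0.
Qed.

Lemma magnetic_tr_unit_section_dual (f : section) x (i : 'I_(n x)) :
  \sum_(y <- x :: nbrs x) bdot (Mt (unit_section i) y) (f y) = M f x i 0.
Proof.
rewrite big_cons bdot_magnetic_tr_unit_self.
have -> : \sum_(y <- nbrs x) bdot (Mt (unit_section i) y) (f y) =
    - \sum_(y <- nbrs x) ((b x y)%:C)%C * (Phi x y *m f y) i 0.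
  by rewrite -sumrN; apply: eq_big_seq => y yx; rewrite bdot_magnetic_tr_unit_nbr.
rewrite (magneticE wg) [RHS]mxE summxE addrAC -sumrB.
congr (_ + _); apply: eq_bigr => y _; rewrite -mulrBr [RHS]mxE; congr (_ * _).
by rewrite !mxE.
Qed.

Lemma magnetic_tr_unit_section_eq0 x (i : 'I_(n x)) y : y \notin x :: nbrs x ->
  Mt (unit_section i) y = 0.
Proof.
rewrite in_cons negb_or => /andP[yx xy]; apply: (magnetic_eq0 wg).
  exact: unit_section_neq.
move=> z zy; apply: unit_section_neq; apply: contra xy => /eqP <-.
by rewrite (nbrsC wg).
Qed.

Theorem magnetic_surjective_of_tr_injective (g : section) :
  (forall u : section, finitely_supported u -> (forall y, Mt u y = 0) -> forall x, u x = 0) ->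
  exists f : section, forall x, M f x = g x.
Proof.
move=> inj.
have coord_sub_scale v c w j :
    section_coord (Mt (sub_scale v c w)) j =
    section_coord (Mt v) j - c * section_coord (Mt w) j.
  rewrite /section_coord; case: pickle_inv => [p|]; last by rewrite mulr0 subr0.
  by rewrite (magnetic_sub_scale wg lf) !mxE.
have pairing_ker v : finitely_supported v -> (forall j, section_coord (Mt v) j = 0) ->
    pairing g v = 0.
  move=> fv Mv0; rewrite (@pairing_seq _ _ _ g v [::]) ?big_nil // => x _.
  apply: inj fv _ x => y; apply/matrixP => k l.
  by rewrite ord1 -(coord_index_of (Mt v)) Mv0 mxE.
have [a Ha] := factor_through_coords (@finitely_supported_sub_scale _ _ _)
  (fun v c w j _ _ => coord_sub_scale v c w j) (fun v c w => @pairing_sub_scale _ _ _ g v c w)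
  pairing_ker.
exists (section_of_coords a) => x; apply/matrixP => i l; rewrite ord1.
set r := nbhd lf [:: x].
have Mt_r : supported_in (Mt (unit_section i)) r.
  exact: (magnetic_supported wg) (unit_section_supported i).
rewrite -magnetic_tr_unit_section_dual -[RHS](pairing_unit_section g i).
have fe : finitely_supported (unit_section (R := R) i).
  by exists [:: x]; exact: unit_section_supported.
rewrite (Ha _ (coord_bound r) fe (fun j => coord_supported Mt_r)).
rewrite (sum_coord _ (nbhd_uniq lf _) Mt_r (leqnn _)).
apply: big_uniq_widen => [||y|y /magnetic_tr_unit_section_eq0 ->].
- by rewrite cons_uniq (nbrs_irr wg) nbrs_uniq.
- exact: nbhd_uniq.
- rewrite in_cons => /orP[/eqP ->|yx]; first by apply: mem_nbhd; rewrite mem_head.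
  by apply: (mem_nbhd_nbrs _ yx); rewrite mem_head.
- exact: bdot0l.
Qed.

End Duality.

Theorem theorem2p3 (R : realType) (X : countType) (b : X -> X -> R)
    (n : X -> nat) (Phi : forall x y : X, 'M[R[i]]_(n x, n y))
    (W : forall x : X, 'M[R[i]]_(n x)) :
  weighted_graph b ->
  connection Phi ->
  selfadjoint_endo W ->
  locally_finite b ->
  all_components_infinite b ->
  qform_nonneg b (Wmin W) \/ qform_nonneg b (fun x => - Wmax W x - 2 * deg b x) ->
  forall g : forall x : X, 'cV[R[i]]_(n x),
    exists f : forall x : X, 'cV[R[i]]_(n x),
      forall x : X, magnetic b Phi W f x = g x.
Proof.
move=> wg conn sa lf ci hq g.
apply: (magnetic_surjective_of_tr_injective wg lf) => u fu Mu.
apply: (magnetic_injective wg lf (connection_trP conn) (selfadjoint_tr sa) ci _ fu Mu).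
by rewrite Wmin_tr ?Wmax_tr.
Qed.
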